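(* Let $p,q$ be primes with $q>p\geq 5$. There are only finitely many triples $(\{x,y\},p,q)$ for which there exists a regular map $\mathcal{M}(G;r,t,\ell)$ of type $\{x,y\}$ with Euler characteristic $-pq$ such that $pq$ divides $|G|$.
   Context: A regular map is given algebraically as a quadruple $\mathcal{M}=\mathcal{M}(G;r,t,\ell)$ where $G$ is a finite group generated by three involutions $r,t,\ell$ with $t\ell=\ell t$. Its type is $\{|rt|,|r\ell|\}$, and its Euler characteristic is $\chi=-\frac{|G|(xy-2x-2y)}{4xy}$ where $x=|rt|$, $y=|r\ell|$. *)

From HB Require Import structures.
From mathcomp Require Import all_boot all_order all_algebra all_fingroup.
Set Implicit Arguments. Unset Strict Implicit. Unset Printing Implicit Defensive.
Import GRing.Theory Num.Theory.

Definition regular_map (gT : finGroupType) (G : {group gT}) (r t l : gT) : Prop :=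
  [/\ [/\ r \in G, t \in G & l \in G],
      [/\ #[r]%g = 2%N, #[t]%g = 2%N & #[l]%g = 2%N],
      t * l = l * t
    & G :=: <<[set r; t; l]>>]%g.

Definition map_type (gT : finGroupType) (r t l : gT) : nat * nat :=
  (#[r * t]%g, #[r * l]%g).

Definition euler_char (gT : finGroupType) (G : {group gT}) (r t l : gT) : rat :=
  let x : rat := (#[r * t]%g)%:R%R in let y : rat := (#[r * l]%g)%:R%R in
  (- ((#|G|)%:R * (x * y - 2 * x - 2 * y)) / (4 * x * y))%R.

(* Write |G| = m pq.  The Euler characteristic equation becomes
   m (xy - 2x - 2y) = 4xy, and since 1/2 - 1/x - 1/y >= 1/42 whenever it is
   positive, m <= 84 and x, y <= 3360.
   Let s > 3360 be a prime with |G|_s = s.  The Sylow s-subgroup S cannot be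
   normal: by Schur-Zassenhaus it has a complement K, and each of <r,t>,
   <r,l>, <t,l>, having order coprime to s, lies in a conjugate K^z with
   z in S.  Two distinct such conjugates only share elements centralising S,
   so r, t, l all lie in one conjugate of K, a proper subgroup.  Hence the
   number n_s of Sylow s-subgroups is > 1, = 1 mod s, and divides |G|/s.
   For s = q this gives q < n_q <= pm <= 84p; and if p > 3360 as well, the
   conditions on n_p and n_q contradict each other.  So x, y, p, q are
   bounded. *)
From mathcomp Require Import all_boot all_order all_algebra all_fingroup all_solvable.
From mathcomp Require Import zify lra.
Set Implicit Arguments. Unset Strict Implicit. Unset Printing Implicit Defensive.
Import GRing.Theory Num.Theory.

(* If 1/x + 1/y < 1/2 then 1/x + 1/y <= 10/21, attained at {x, y} = {3, 7}. *)
Lemma hyperbolic_gap x y : 2 * (x + y) < x * y -> 21 * (x + y) <= 10 * (x * y).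
Proof.
wlog le_xy : x y / x <= y.
  move=> hwlog; case: (leqP x y) => [/hwlog//|/ltnW/hwlog].
  by rewrite [y + x]addnC [y * x]mulnC.
move=> hyp.
have [x_le4|x_ge5] := leqP x 4; last by nia.
have : (x == 3) || (x == 4) by apply/orP; nia.
by case/orP=> /eqP x_eq; subst x; nia.
Qed.

Section EulerEquation.
Variables m x y : nat.
Hypotheses (x_gt0 : 0 < x) (y_gt0 : 0 < y).
Hypothesis euler : m * (x * y) = 4 * (x * y) + 2 * m * (x + y).

Lemma euler_cofactor_gt4 : 4 < m.
Proof. nia. Qed.

Lemma euler_cofactor_le84 : m <= 84.
Proof.
have gap : 2 * (x + y) < x * y by nia.
have := hyperbolic_gap gap; nia.
Qed.

Lemma euler_period_le : x <= 3360.
Proof.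
have m_gt4 := euler_cofactor_gt4; have m_le84 := euler_cofactor_le84.
have [y_le20|y_gt20] := leqP y 20; last first.
  have [x_le20|x_gt20] := leqP x 20; last by nia.
  by rewrite (leq_trans x_le20).
have coef_gt0 : 2 * m + 4 * y < m * y.
  by rewrite -(ltn_pmul2l x_gt0); nia.
have : x * (m * y - (2 * m + 4 * y)) = 2 * m * y by rewrite mulnBr; nia.
nia.
Qed.

End EulerEquation.

Lemma ltn_mod1 A q : 1 < A -> A %% q = 1 -> q < A.
Proof.
move=> A_gt1 Aq; have := divn_eq A q; rewrite Aq.
have [->|k_gt0] := posnP (A %/ q); first by lia.
by move=> ->; rewrite addn1 ltnS leq_pmull.
Qed.

Lemma dvdn_prime_mul_mod1 p q m A : prime p -> 0 < m -> m < q ->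
  1 < A -> A %% q = 1 -> A %| p * m -> exists2 d, A = p * d & d %| m.
Proof.
move=> pp m_gt0 lt_mq A_gt1 Aq dvA.
have lt_qA := ltn_mod1 A_gt1 Aq.
have [/dvdnP[d Ad]|p'A] := boolP (p %| A).
  by exists d; [rewrite mulnC | move: dvA; rewrite Ad mulnC dvdn_pmul2l ?prime_gt0].
have /(dvdn_leq m_gt0) : A %| m.
  by rewrite -(Gauss_dvdr _ (_ : coprime A p)) // coprime_sym prime_coprime.
lia.
Qed.

(* With A = p d = k q + 1 and B = q e = k' p + 1 one gets
   q (k + e) = p (d + k'), although 0 < k + e < 2 m < p. *)
Lemma Sylow_numbers_incompatible p q m A B :
  prime p -> prime q -> p < q -> 0 < m -> 2 * m < p ->
  1 < A -> A %% q = 1 -> A %| p * m -> 1 < B -> B %% p = 1 -> B %| q * m -> False.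
Proof.
move=> pp pq lt_pq m_gt0 lt_2m_p A_gt1 Aq dvA B_gt1 Bp dvB.
have lt_mp : m < p by lia.
have [d Ad /(dvdn_leq m_gt0) le_dm] :=
  dvdn_prime_mul_mod1 pp m_gt0 (ltn_trans lt_mp lt_pq) A_gt1 Aq dvA.
have [e Be /(dvdn_leq m_gt0) le_em] := dvdn_prime_mul_mod1 pq m_gt0 lt_mp B_gt1 Bp dvB.
have := divn_eq A q; have := divn_eq B p; rewrite Aq Bp.
set k := A %/ q; set k' := B %/ p => EB EA; clearbody k k'.
have lt_kd : k < d by rewrite -(ltn_pmul2r (prime_gt0 pq)); nia.
have : p %| k + e.
  have cop_pq : coprime p q by rewrite prime_coprime // dvdn_prime2 // ltn_eqF.
  rewrite -(Gauss_dvdr _ cop_pq) (_ : q * (k + e) = p * (d + k')) ?dvdn_mulr //.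
  by rewrite !mulnDr -Be -Ad EA EB (mulnC q k) (mulnC k' p) addnA addnAC.
have e_gt0 : 0 < e by rewrite lt0n; apply: contraTneq B_gt1 => e0; rewrite Be e0 muln0.
by move/dvdn_leq; lia.
Qed.

Lemma euler_char_cofactor (gT : finGroupType) (G : {group gT}) (r t l : gT) m n x y :
  0 < n -> #|G| = m * n -> map_type r t l = (x, y) ->
  euler_char G r t l = (- n%:R)%R ->
  m * (x * y) = 4 * (x * y) + 2 * m * (x + y).
Proof.
move=> n_gt0 oG [ox oy]; rewrite /euler_char ox oy oG => chiE.
have x0 : (x%:R != 0 :> rat)%R by rewrite pnatr_eq0 -lt0n -ox order_gt0.
have y0 : (y%:R != 0 :> rat)%R by rewrite pnatr_eq0 -lt0n -oy order_gt0.
have n0 : (n%:R != 0 :> rat)%R by rewrite pnatr_eq0 -lt0n.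
have d0 : (4 * x%:R * y%:R != 0 :> rat)%R by rewrite !mulf_neq0.
move/(congr1 (fun z => z * (4 * x%:R * y%:R))%R): chiE.
rewrite divfK // natrM => chiE.
apply/eqP; rewrite -(eqr_nat rat) !natrD !natrM; apply/eqP.
by apply: (mulfI n0); lra.
Qed.

Section RegularMapSylow.
Local Open Scope group_scope.

Lemma card_gen_involutions_dvdn (gT : finGroupType) (x y : gT) :
  #[x] = 2 -> #[y] = 2 -> #|<<[set x; y]>>| %| (#[x * y]).*2.
Proof.
move=> ox oy; have [<-|ne_xy] := eqVneq x y.
  by rewrite -[x * x]/(x ^+ 2) -ox expg_order order1 setUid -[<<_>>]/<[x]> -orderE ox.
have oxy_gt1 : 1 < #[x * y] by rewrite order_gt1 -eq_invg_mul invg_expg ox.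
rewrite -(card_dihedral oxy_gt1) card_homg // Grp'_dihedral //.
apply/existsP; exists (x, y); rewrite /= !xpair_eqE.
by rewrite joing_idl joing_idr -{1}ox -oy !expg_order !eqxx.
Qed.

Section ComplementConjugates.
Variables (gT : finGroupType) (G S K : {group gT}).
Hypotheses (nsSG : S <| G) (tiSK : S :&: K = 1) (defG : S * K = G).

Let nSK : K \subset 'N(S).
Proof. by rewrite (subset_trans _ (normal_norm nsSG)) // -defG mulG_subr. Qed.

Lemma coprime_sub_conj_compl (D : {group gT}) :
  solvable S -> D \subset G -> coprime #|S| #|D| -> exists2 x, x \in S & D \subset K :^ x.
Proof.
move=> solS sDG coSD.
have nSD : D \subset 'N(S) := subset_trans sDG (normal_norm nsSG).
pose L := (S <*> D)%G.
have sLG : L \subset G by rewrite join_subG normal_sub.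
have defL : S * (K :&: L) = L.
  by rewrite group_modl ?joing_subl // defG (setIidPr sLG).
have tiSKL : S :&: (K :&: L) = 1.
  by apply/trivgP; rewrite -tiSK setIS ?subsetIl.
have oKL : #|K :&: L| = #|D|.
  apply/eqP; rewrite -(eqn_pmul2l (cardG_gt0 S)) -(TI_cardMg tiSKL) defL.
  by rewrite /= norm_joinEr // TI_cardMg // coprime_TIg.
have [x Sx defD] : exists2 x, x \in S & D :=: (K :&: L) :^ x.
  apply: SchurZassenhaus_trans_sol (esym oKL) => //.
  - by rewrite (subset_trans (subsetIl _ _) nSK).
  - by rewrite defL joing_subr.
  - by rewrite oKL.
by exists x => //; rewrite defD conjSg subsetIl.
Qed.

Lemma cent_conj_compl x z (g : gT) : x \in S -> z \in S ->
  g \in K :^ x -> g \in 'C(S) -> g \in K :^ z.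
Proof.
move=> Sx Sz Kx_g Cg.
have -> : K :^ z = (K :^ x) :^ (x^-1 * z) by rewrite -conjsgM mulKVg.
have gJ : g ^ (x^-1 * z) = g.
  by apply/conjg_fixP/commgP/(centP Cg); rewrite groupM ?groupV.
by rewrite -gJ memJ_conjg.
Qed.

Hypothesis pS : prime #|S|.

Lemma conj_compl_cent x y g : x \in S -> y \in S -> K :^ x != K :^ y ->
  g \in K :^ x -> g \in K :^ y -> g \in 'C(S).
Proof.
move=> Sx Sy neKxy Kx_g Ky_g.
pose k := g ^ x^-1; pose u := x * y^-1.
have Kk : k \in K by rewrite -(memJ_conjg _ x) conjgKV.
have Kku : k ^ u \in K by rewrite -conjgM /u mulgA mulVg mul1g -(memJ_conjg _ y) conjgKV.
have Su : u \in S by rewrite groupM ?groupV.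
have ntu : u != 1 by apply: contra neKxy; rewrite /u -eq_mulgV1 => /eqP->.
have cku : commute k u.
  have : [~ k, u] \in S :&: K.
    rewrite inE; apply/andP; split; last by rewrite commgEl groupM ?groupV.
    by rewrite commgEr groupM // memJ_norm ?groupV // (subsetP nSK).
  by rewrite tiSK inE => /commgP.
have cSk : S \subset 'C[k].
  have [//|tiCS] := prime_subgroupVti 'C[k] pS.
  have : u \in 'C[k] :&: S by rewrite inE Su andbT; apply/cent1P.
  by rewrite tiCS => /set1gP u1; rewrite u1 eqxx in ntu.
have Ck : k \in 'C(S) by rewrite -sub_cent1.
have kxk : k ^ x = k by apply/conjg_fixP/commgP/(centP Ck).
by rewrite -(conjgKV x g) -/k kxk.
Qed.

End ComplementConjugates.

Lemma regular_map_prime_Hall_not_normal (gT : finGroupType) (G S : {group gT}) (r t l : gT) :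
  regular_map G r t l -> Hall G S -> prime #|S| -> 2 < #|S| ->
  coprime #|S| #[r * t] -> coprime #|S| #[r * l] -> ~~ (S <| G).
Proof.
case=> [[Gr Gt Gl] [or ot ol] ctl defG] hallS pS S_gt2 co_rt co_rl.
apply/negP => nsSG.
have [K /complP[tiSK defSK]] := splitsP (SchurZassenhaus_split hallS nsSG).
have solS := abelian_sol (cyclic_abelian (prime_cyclic pS)).
have coS2 : coprime #|S| 2.
  by rewrite coprime_sym prime_coprime // dvdn_prime2 // ltn_eqF.
have pair_conj_compl a b : #[a] = 2 -> #[b] = 2 -> a \in G -> b \in G ->
    coprime #|S| #[a * b] -> exists2 x, x \in S & a \in K :^ x /\ b \in K :^ x.
  move=> oa ob Ga Gb co_ab.
  have sDG : <<[set a; b]>> \subset G.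
    by rewrite gen_subG; apply/subsetP => w; rewrite !inE => /orP[]/eqP->.
  have [|x Sx sDK] := coprime_sub_conj_compl nsSG tiSK defSK solS sDG.
    by rewrite (coprime_dvdr (card_gen_involutions_dvdn oa ob)) // -mul2n coprimeMr coS2.
  by exists x => //; split; apply: (subsetP sDK); rewrite mem_gen // !inE eqxx ?orbT.
have co_tl : coprime #|S| #[t * l].
  apply: coprime_dvdr coS2; rewrite order_dvdn -[_ ^+ 2]/(t * l * (t * l)).
  rewrite {2}ctl mulgA -(mulgA t) -[l * l]/(l ^+ 2) -ol expg_order mulg1.
  by rewrite -[t * t]/(t ^+ 2) -ot expg_order.
have [x1 Sx1 [Kr1 Kt1]] := pair_conj_compl r t or ot Gr Gt co_rt.
have [x2 Sx2 [Kr2 Kl2]] := pair_conj_compl r l or ol Gr Gl co_rl.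
have [x3 Sx3 [Kt3 Kl3]] := pair_conj_compl t l ot ol Gt Gl co_tl.
have [z Sz [Kr Kt Kl]] : exists2 z, z \in S & [/\ r \in K :^ z, t \in K :^ z & l \in K :^ z].
  have [e23|ne23] := eqVneq (K :^ x2) (K :^ x3); first by exists x2 => //; split; rewrite // e23.
  exists x1 => //; split => //.
  exact: cent_conj_compl Sx2 Sx1 Kl2 (conj_compl_cent nsSG tiSK defSK pS Sx2 Sx3 ne23 Kl2 Kl3).
have /subset_leq_card : G \subset K :^ z.
  by rewrite defG gen_subG; apply/subsetP => w; rewrite !inE => /orP[/orP[]|]/eqP->.
by rewrite cardJg -defSK TI_cardMg // -{2}(mul1n #|K|) leq_pmul2r // leqNgt prime_gt1.
Qed.

Lemma regular_map_Sylow_count (gT : finGroupType) (G : {group gT}) (r t l : gT) s n :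
  regular_map G r t l -> prime s -> 2 < s -> #|G| = (n * s)%N -> ~~ (s %| n) ->
  coprime s #[r * t] -> coprime s #[r * l] ->
  [/\ 1 < #|'Syl_s(G)|, #|'Syl_s(G)| %% s = 1%N & #|'Syl_s(G)| %| n].
Proof.
move=> regG ps s_gt2 oG s'n co_rt co_rl.
have n_gt0 : 0 < n by move: (cardG_gt0 G); rewrite oG muln_gt0 => /andP[].
have oSyl (Q : {group gT}) : s.-Sylow(G) Q -> #|Q| = s.
  move=> sylQ; rewrite (card_Hall sylQ) oG (partnM _ n_gt0 (prime_gt0 ps)).
  by rewrite part_p'nat ?p'natE // mul1n part_pnat_id ?pnat_id.
have [P sylP] := Sylow_exists s G.
have iP : #|G : P| = n.
  apply/eqP; rewrite -(eqn_pmul2l (prime_gt0 ps)) -{1}(oSyl P sylP).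
  by rewrite Lagrange ?(pHall_sub sylP) // oG mulnC.
split; last 2 first.
- exact: card_Syl_mod.
- by rewrite (card_Syl sylP) -iP indexgS // subsetI (pHall_sub sylP) normG.
have : 0 < #|'Syl_s(G)| by apply/card_gt0P; exists P; rewrite inE.
rewrite leq_eqVlt eq_sym => /orP[/normal_sylowP[Q sylQ nsQG]|//].
have oQ := oSyl Q sylQ.
suff : ~~ (Q <| G) by rewrite nsQG.
by apply: regular_map_prime_Hall_not_normal regG (pHall_Hall sylQ) _ _ _ _; rewrite oQ.
Qed.

End RegularMapSylow.

Lemma regular_map_type_primes_bounded (gT : finGroupType) (G : {group gT}) (r t l : gT)
    x y p q :
  prime p -> prime q -> p < q -> regular_map G r t l -> map_type r t l = (x, y) ->
  euler_char G r t l = (- (p * q)%:R)%R -> p * q %| #|G| ->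
  [/\ x <= 3360, y <= 3360, p <= 3360 & q <= 3360 * 84].
Proof.
move=> pp pq lt_pq regG typeG chiG /dvdnP[m oG].
have pq_gt0 : 0 < p * q by rewrite muln_gt0 !prime_gt0.
have euler := euler_char_cofactor pq_gt0 oG typeG chiG.
have [x_gt0 y_gt0] : 0 < x /\ 0 < y by case: typeG => <- <-; rewrite !order_gt0.
have m_gt4 := euler_cofactor_gt4 x_gt0 y_gt0 euler.
have m_le84 := euler_cofactor_le84 x_gt0 y_gt0 euler.
have x_le := euler_period_le x_gt0 y_gt0 euler.
have y_le : y <= 3360.
  by apply: (euler_period_le (m := m) y_gt0 x_gt0); rewrite [y * x]mulnC [y + x]addnC.
have Syl s o : prime s -> prime o -> s != o -> o * s = p * q -> 3360 < s ->
    let n_s := #|('Syl_s(G))%g| in [/\ 1 < n_s, n_s %% s = 1 & n_s %| o * m].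
  move=> ps po neq_so def_pq s_big.
  have coprime_small z : 0 < z -> z <= 3360 -> coprime s z.
    by move=> z_gt0 z_le; rewrite prime_coprime //; apply/negP => /(dvdn_leq z_gt0); lia.
  apply: (regular_map_Sylow_count regG ps); first by lia.
  - by rewrite oG -def_pq mulnCA mulnA.
  - rewrite Euclid_dvdM // dvdn_prime2 // (negPf neq_so) /=.
    by apply/negP => /dvdn_leq; lia.
  - by case: typeG => -> _; apply: coprime_small.
  - by case: typeG => _ ->; apply: coprime_small.
have p_le : p <= 3360.
  rewrite leqNgt; apply/negP => p_big.
  have [nq_gt1 nq_mod nq_dvd] :=
    Syl q p pq pp (negbT (gtn_eqF lt_pq)) erefl (ltn_trans p_big lt_pq).
  have [np_gt1 np_mod np_dvd] := Syl p q pp pq (negbT (ltn_eqF lt_pq)) (mulnC q p) p_big.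
  by apply: Sylow_numbers_incompatible pp pq lt_pq _ _ nq_gt1 nq_mod nq_dvd np_gt1 np_mod np_dvd; lia.
split=> //; rewrite leqNgt; apply/negP => q_big.
have q_gt : 3360 < q by lia.
have [nq_gt1 nq_mod nq_dvd] := Syl q p pq pp (negbT (gtn_eqF lt_pq)) erefl q_gt.
have pm_le : p * m <= 3360 * 84 by rewrite leq_mul.
have := ltn_mod1 nq_gt1 nq_mod; have := dvdn_leq _ nq_dvd.
by rewrite muln_gt0 prime_gt0 //=; lia.
Qed.

Lemma bounded_quadruples_finite N M : exists s : seq (nat * nat * nat * nat),
  forall x y p q, x <= N -> y <= N -> p <= N -> q <= M -> (x, y, p, q) \in s.
Proof.
exists [seq (val a.1.1.1, val a.1.1.2, val a.1.2, val a.2)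
         | a <- enum {: 'I_N.+1 * 'I_N.+1 * 'I_N.+1 * 'I_M.+1}].
move=> x y p q x_le y_le p_le q_le; apply/mapP.
exists (Ordinal (x_le : x < N.+1), Ordinal (y_le : y < N.+1),
        Ordinal (p_le : p < N.+1), Ordinal (q_le : q < M.+1)) => //.
by rewrite mem_enum.
Qed.

Theorem theorem3p1 :
  exists s : seq (nat * nat * nat * nat),
    forall x y p q : nat,
      prime p -> prime q -> (5 <= p)%N -> (p < q)%N ->
      (exists (gT : finGroupType) (G : {group gT}) (r t l : gT),
          [/\ regular_map G r t l,
              map_type r t l = (x, y),
              euler_char G r t l = (- ((p * q)%N)%:R : rat)%R
            & (p * q %| #|G|)%N]) ->
      (x, y, p, q) \in s.
Proof.
have [s s_bounded] := bounded_quadruples_finite 3360 (3360 * 84).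
exists s => x y p q pp pq _ lt_pq [gT [G [r [t [l [regG typeG chiG dvdG]]]]]].
have [x_le y_le p_le q_le] :=
  regular_map_type_primes_bounded pp pq lt_pq regG typeG chiG dvdG.
exact: s_bounded.
Qed.
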